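(* Fix an integer base $b\ge 2$ and $f_*:\{0,\dots,b-1\}\to\mathbb{Z}^{\ge 0}$ with $f_*(0)=0$, $f_*(1)=1$, $\gcd(b,f_*(b-1))=1$, and suppose there is a digit $0\le m_*\le b-1$ with $\gcd(f(m_* )-m_*,f(b-1))=1$, where $f$ is the digit map $f\left(\sum_i a_ib^i\right)=\sum_i f_*(a_i)$ (base-$b$ representation). Let $u$ be a positive integer with $f^r(u)=u$ for some $r\ge 1$. Then for each $x\in\mathbb{Z}^+$ there is a $u$-integer $l$ such that $l$ and $l+x$ are concurrently $u$-integers.
   Context: $f^r$ is the $r$-fold iterate of $f$. A positive integer $n$ is a $u$-integer if $f^r(n)=u$ for some $r\ge1$. Two positive integers $m,n$ are concurrently $u$-integers if there is some $r\ge 1$ with $f^r(m)=f^r(n)=u$. *)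

From mathcomp Require Import all_boot all_order all_algebra.
Set Implicit Arguments. Unset Strict Implicit. Unset Printing Implicit Defensive.

(* Base-b digits of n, least significant first (fuel-bounded; fuel n
   suffices for b >= 2). digits b 0 = [::]. *)
Fixpoint digits_aux (fuel b n : nat) : seq nat :=
  match fuel with
  | 0 => [::]
  | k.+1 => if n == 0 then [::] else (n %% b) :: digits_aux k b (n %/ b)
  end.
Definition digits (b n : nat) : seq nat := digits_aux n b n.

Definition digit_map (b : nat) (fstar : nat -> nat) (n : nat) : nat :=
  \sum_(a <- digits b n) fstar a.

Definition u_integer (f : nat -> nat) (u n : nat) : Prop :=
  exists r, 0 < r /\ iter r f n = u.

Definition concurrently_u_integers (f : nat -> nat) (u m n : nat) : Prop :=
  exists r, 0 < r /\ iter r f m = u /\ iter r f n = u.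

From mathcomp Require Import all_boot all_order all_algebra cyclic.
From mathcomp Require Import zify ring.
Import GRing.Theory.
Set Implicit Arguments. Unset Strict Implicit. Unset Printing Implicit Defensive.

(* Write F = fstar (b-1). If l ends with the digits of b^x - x followed by k
   digits b-1, adding x carries into a single digit 1, so the higher digits of
   l can be chosen to give f(l + x) = w and f(l) = y + w for any w > 0, provided
   y + 1 = f(b^x - x) + kF. If moreover f(y) = b^J - 1 and w = b^y c, then
   f(y + w) = b^J - 1 + f(c) and f(w) = f(c); choosing f(c) = 1 + b^(J+1) d,
   these two numbers are b^J + b^(J+1) d and 1 + b^(J+1) d, whose images agree,
   and d is chosen so that this common image maps to u.
   Such a y is made of p digits 1 and q digits m at positions that are
   multiples of totient F, so f(y) = p + q fstar(m) while
   y = p + q m (mod F); the gcd hypothesis lets q fix y + 1 modulo F. *)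

Lemma solve_mod_linear F g m a c : 0 < F ->
  intdiv.gcdz (g%:Z - m%:Z)%R F%:Z = 1%R ->
  exists q, q * m + a = q * g + c %[mod F].
Proof.
move=> F_gt0 gcd1; have [u [v bezout]] := intdiv.Bezoutz (g%:Z - m%:Z)%R F%:Z.
rewrite gcd1 in bezout.
set X := ((a%:Z - c%:Z) * u)%R; set r := intdiv.modz X F.
have r_ge0 : (0 <= r)%R by apply: intdiv.modz_ge0; rewrite eqz_nat -lt0n.
have r_eq : r = (X - intdiv.divz X F * F%:Z)%R.
  by rewrite [X in (X - _)%R](intdiv.divz_eq X F) addrAC subrr add0r.
exists `|r|%N; apply/eqP; rewrite -eqz_nat -!intdiv.modz_nat intdiv.eqz_mod_dvd.
apply/intdiv.dvdzP.
exists ((a%:Z - c%:Z) * v + intdiv.divz X F * (g%:Z - m%:Z))%R.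
apply/eqP; rewrite -subr_eq0; apply/eqP.
transitivity ((a%:Z - c%:Z) * (1 - (u * (g%:Z - m%:Z) + v * F%:Z)))%R.
  by rewrite !PoszD !PoszM gez0_abs // r_eq /X; ring.
by rewrite bezout subrr mulr0.
Qed.

Lemma eq_mod_add_mul F a n :
  a <= n -> n = a %[mod F] -> exists k, n = a + k * F.
Proof.
move=> le_an /eqP; rewrite eqn_mod_dvd // => /dvdnP [k nk].
by exists k; rewrite -nk subnKC.
Qed.

Section DigitMap.
Variables (b : nat) (fstar : nat -> nat).
Hypothesis b_gt1 : 1 < b.
Hypothesis fstar0 : fstar 0 = 0.
Local Notation f := (digit_map b fstar).

Lemma digits_aux_fuel k1 k2 n : n <= k1 -> n <= k2 ->
  digits_aux k1 b n = digits_aux k2 b n.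
Proof.
elim: k1 k2 n => [|k1 IH] [|k2] n //= le1 le2; try by have -> : n = 0 by lia.
have [//|n_gt0] := posnP n.
congr (_ :: _); apply: IH; have := ltn_Pdiv b_gt1 n_gt0; lia.
Qed.

Lemma digit_map0 : f 0 = 0.
Proof. by rewrite /digit_map /digits /= big_nil. Qed.

Lemma digit_mapE n : f n = fstar (n %% b) + f (n %/ b).
Proof.
case: n => [|n]; first by rewrite mod0n div0n digit_map0 fstar0.
have lt_div : n.+1 %/ b <= n by rewrite -ltnS ltn_Pdiv.
by rewrite /digit_map /digits /= (@digits_aux_fuel n (n.+1 %/ b)) ?big_cons.
Qed.

Lemma digit_mapD k a c : a < b ^ k -> f (a + b ^ k * c) = f a + f c.
Proof.
elim: k a => [|k IH] a lt_a.
  by move: lt_a; rewrite expn0 ltnS leqn0 => /eqP->; rewrite mul1n digit_map0.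
have b_gt0 : 0 < b by apply: ltnW.
have -> : a + b ^ k.+1 * c = b ^ k * c * b + a by rewrite expnS; ring.
rewrite digit_mapE (digit_mapE a) modnMDl divnMDl //.
rewrite [_ + a %/ b]addnC IH ?addnA //.
by rewrite ltn_divLR // -expnSr.
Qed.

Lemma digit_map_digit d : d < b -> f d = fstar d.
Proof.
by move=> lt_d; rewrite digit_mapE modn_small ?divn_small ?digit_map0 ?addn0.
Qed.

Lemma digit_map_shift k c : f (b ^ k * c) = f c.
Proof.
by rewrite -[b ^ k * c]add0n digit_mapD ?expn_gt0 ?digit_map0 ?(ltnW b_gt1).
Qed.

Lemma digit_map_expn k : f (b ^ k) = fstar 1.
Proof. by rewrite -[b ^ k]muln1 digit_map_shift digit_map_digit. Qed.

Lemma digit_map_predn_expn k : f (b ^ k).-1 = k * fstar b.-1.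
Proof.
have lt_pred : b.-1 < b by rewrite prednK ?(ltnW b_gt1).
elim: k => [|k IH]; first by rewrite expn0 digit_map0.
have -> : (b ^ k.+1).-1 = b.-1 + b ^ 1 * (b ^ k).-1.
  have := expn_gt0 b k; rewrite expnS expn1 (ltnW b_gt1) /=; nia.
by rewrite digit_mapD ?expn1 // digit_map_digit // IH mulSn.
Qed.

Fixpoint repdigit (s d n : nat) : nat :=
  if n is n'.+1 then d + b ^ s * repdigit s d n' else 0.

Lemma repdigit_lt s d n : 0 < s -> d < b -> repdigit s d n < b ^ (s * n).
Proof.
move=> s_gt0 lt_d; elim: n => [|n IH] /=; first by rewrite muln0 expn0.
have le_b : b <= b ^ s by rewrite -{1}(expn1 b) leq_pexp2l // ltnW.
rewrite mulnS expnD; nia.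
Qed.

Lemma digit_map_repdigit s d n :
  0 < s -> d < b -> f (repdigit s d n) = n * fstar d.
Proof.
move=> s_gt0 lt_d; elim: n => [|n IH] /=; first by rewrite digit_map0.
have lt_ds : d < b ^ s.
  by rewrite (leq_trans lt_d) // -{1}(expn1 b) leq_pexp2l // ltnW.
by rewrite digit_mapD // IH digit_map_digit // mulSn.
Qed.

Lemma leq_repdigit1 s n : n <= repdigit s 1 n.
Proof.
elim: n => [|n IH] //=; rewrite add1n ltnS (leq_trans IH) //.
by rewrite leq_pmull // expn_gt0 (ltnW b_gt1).
Qed.

Lemma repdigit_mod F s d n :
  b ^ s = 1 %[mod F] -> repdigit s d n = d * n %[mod F].
Proof.
move=> bs_mod; elim: n => [|n IH] /=; first by rewrite muln0.
by rewrite -modnDmr -modnMml bs_mod modnMml mul1n IH modnDmr mulnS.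
Qed.

Lemma preimage_with_residue F s m p q :
  0 < s -> m < b -> b ^ s = 1 %[mod F] ->
  exists y, [/\ f y = p * fstar 1 + q * fstar m,
                y = p + q * m %[mod F] & p <= y].
Proof.
move=> s_gt0 lt_m bs_mod.
exists (repdigit s 1 p + b ^ (s * p) * repdigit s m q); split.
- by rewrite digit_mapD ?repdigit_lt // !digit_map_repdigit.
- rewrite -modnDm -modnMml expnM -modnXm bs_mod modnXm exp1n modnMml mul1n.
  by rewrite !repdigit_mod // mul1n [m * q]mulnC modnDm.
- exact: leq_trans (leq_repdigit1 s p) (leq_addr _ _).
Qed.

Hypothesis fstar1 : fstar 1 = 1.

Lemma digit_map_repunit n : f (repdigit 1 1 n) = n.
Proof. by rewrite digit_map_repdigit // fstar1 muln1. Qed.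

Lemma carry_pair x k w : 0 < x ->
  exists l, [/\ 0 < l, f l = f (b ^ x - x) + k * fstar b.-1 + w
              & f (l + x) = w.+1].
Proof.
move=> x_gt0; have lt_x : x < b ^ x := ltn_expl x b_gt1.
have lt_bx : b ^ x - x < b ^ x by rewrite ltn_subrL x_gt0 expn_gt0 (ltnW b_gt1).
set L := b ^ x - x + b ^ x * (b ^ k).-1.
have L_x : L + x = b ^ (x + k).
  rewrite /L expnD addnAC subnK 1?ltnW //.
  by rewrite addnC -mulnSr prednK // expn_gt0 (ltnW b_gt1).
have lt_exp : b ^ (x + k) < b ^ (x + k).+1 by rewrite ltn_exp2l.
have lt_L : L < b ^ (x + k).+1 by rewrite (leq_trans _ lt_exp) // -L_x leq_addr.
exists (L + b ^ (x + k).+1 * repdigit 1 1 w); split.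
- by rewrite ltn_addr // ltn_addr // subn_gt0.
- by rewrite digit_mapD // digit_mapD // digit_map_predn_expn digit_map_repunit.
- by rewrite addnAC L_x digit_mapD // digit_map_expn fstar1 digit_map_repunit.
Qed.

Lemma merging_pair J y t : f y = (b ^ J).-1 -> 0 < t ->
  exists w, [/\ 0 < w, f (f (y + w)) = t & f (f w) = t].
Proof.
move=> f_y t_gt0; have b_gt0 : 0 < b := ltnW b_gt1.
set c := repdigit 1 1 t.-1; set v := 1 + b ^ J.+1 * c.
have f_v : f v = t.
  rewrite digit_mapD; last by rewrite -{1}(expn0 b) ltn_exp2l.
  by rewrite digit_map_digit // fstar1 digit_map_repunit add1n prednK.
have f_Ev : f ((b ^ J).-1 + v) = t.
  rewrite addnA addn1 prednK ?expn_gt0 ?b_gt0 //.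
  rewrite digit_mapD; last by rewrite ltn_exp2l.
  by rewrite digit_map_expn fstar1 digit_map_repunit add1n prednK.
exists (b ^ y * repdigit 1 1 v); split.
- by rewrite muln_gt0 expn_gt0 b_gt0 (leq_trans _ (leq_repdigit1 _ _)).
- by rewrite (digit_mapD _ (ltn_expl y b_gt1)) f_y digit_map_repunit.
- by rewrite digit_map_shift digit_map_repunit.
Qed.

Lemma all_nines_preimage m A :
  coprime b (fstar b.-1) -> m < b ->
  intdiv.gcdz ((fstar m)%:Z - m%:Z)%R (fstar b.-1)%:Z = 1%R ->
  exists J y k, f y = (b ^ J).-1 /\ y.+1 = A + k * fstar b.-1.
Proof.
set F := fstar b.-1 => coprime_bF lt_m gcd1.
have F_gt0 : 0 < F.
  rewrite lt0n; apply: contraTneq coprime_bF => ->.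
  by rewrite /coprime gcdn0 gtn_eqF.
have lam_gt0 : 0 < totient F by rewrite totient_gt0.
have [q q_mod] := solve_mod_linear 1 A F_gt0 gcd1.
set N := (q * fstar m + A).+1; set J := totient F * N.
have bJ_mod : b ^ J = 1 %[mod F].
  by rewrite expnM -modnXm Euler_exp_totient // modnXm exp1n.
have lt_N : N < b ^ J.
  by rewrite (leq_trans (ltn_expl N b_gt1)) // leq_pexp2l ?leq_pmull // ltnW.
have lt_nines : q * fstar m + A < (b ^ J).-1 by move: lt_N; rewrite /N; lia.
have nines_mod : (b ^ J).-1 = 0 %[mod F].
  apply/eqP; rewrite -(eqn_modDr 1) !addn1 prednK ?expn_gt0 ?(ltnW b_gt1) //.
  exact/eqP.
set p := (b ^ J).-1 - q * fstar m.
have le_qg : q * fstar m <= (b ^ J).-1.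
  by rewrite (leq_trans (leq_addr A _)) // ltnW.
have p_eq : p + q * fstar m = (b ^ J).-1 by rewrite subnK.
have le_Ap : A <= p by rewrite /p leq_subRL // (ltnW lt_nines).
have [y [f_y y_mod le_py]] :=
  preimage_with_residue p q lam_gt0 lt_m (Euler_exp_totient coprime_bF).
have y1_mod : y.+1 = A %[mod F].
  rewrite -addn1 -modnDml y_mod modnDml -addnA -modnDmr q_mod modnDmr.
  rewrite addnA p_eq.
  by rewrite -modnDml nines_mod modnDml.
have le_Ay : A <= y.+1 by rewrite (leq_trans le_Ap) // leqW.
have [k y1_eq] := eq_mod_add_mul le_Ay y1_mod.
exists J, y, k; split; last exact: y1_eq.
by rewrite f_y fstar1 muln1; apply: p_eq.
Qed.

End DigitMap.

Theorem corollary2p2 (b : nat) (fstar : nat -> nat) (mstar u : nat) :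
  2 <= b ->
  fstar 0 = 0 -> fstar 1 = 1 ->
  coprime b (fstar b.-1) ->
  mstar <= b.-1 ->
  intdiv.gcdz ((digit_map b fstar mstar)%:Z - mstar%:Z)%R
              (digit_map b fstar b.-1)%:Z = 1%R ->
  0 < u ->
  (exists r, 0 < r /\ iter r (digit_map b fstar) u = u) ->
  forall x : nat, 0 < x ->
    exists l : nat, 0 < l /\ u_integer (digit_map b fstar) u l /\
      concurrently_u_integers (digit_map b fstar) u l (l + x).
Proof.
move=> b_gt1 fstar0 fstar1 coprime_bF le_m gcd1 u_gt0 _ x x_gt0.
have lt_m : mstar < b by rewrite (leq_ltn_trans le_m) // prednK // ltnW.
have lt_pred : b.-1 < b by rewrite prednK // ltnW.
rewrite !digit_map_digit // in gcd1.
have [J [y [k [f_y y1_eq]]]] :=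
  all_nines_preimage b_gt1 fstar0 fstar1 (digit_map b fstar (b ^ x - x))
                     coprime_bF lt_m gcd1.
set s := repdigit b 1 1 u.
have f_s : digit_map b fstar s = u := digit_map_repunit b_gt1 fstar0 fstar1 u.
have s_gt0 : 0 < s := leq_trans u_gt0 (leq_repdigit1 b_gt1 1 u).
have [w [w_gt0 f2_yw f2_w]] := merging_pair b_gt1 fstar0 fstar1 f_y s_gt0.
have [l [l_gt0 f_l f_lx]] := carry_pair b_gt1 fstar0 fstar1 k w.-1 x_gt0.
rewrite -y1_eq addSnnS prednK // in f_l; rewrite prednK // in f_lx.
exists l; split=> //; split; first by exists 4; rewrite /= f_l f2_yw f_s.
by exists 4; rewrite /= f_l f_lx f2_yw f2_w f_s.
Qed.
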